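(* Consider the following one-step ($n=1$) scenario with two players. There is a single initial state (''cake''); the observation $O_1\in\{\text{red},\text{green}\}$, where player 1 believes $\mathbb P^1(\text{red})=0.9$, $\mathbb P^1(\text{green})=0.1$ and player 2 believes $\mathbb P^2(\text{red})=0.1$, $\mathbb P^2(\text{green})=0.9$. The action $A_1\in\{(\text{all},\text{none}),(\text{half},\text{half}),(\text{none},\text{all})\}$ determines the outcome, with utilities $U^1=30,20,0$ and $U^2=0,20,30$ respectively for these three actions (regardless of the observation). A policy $\pi$ assigns to each $o_1\in\{\text{red},\text{green}\}$ a distribution $\pi(\cdot\mid o_1)$ on the three actions; $\mathbb E^j[U^j;\pi]=\sum_{o_1}\mathbb P^j(o_1)\sum_{a}\pi(a\mid o_1)U^j(a)$, and for a distribution $\alpha$ on actions $\mathbb E^j[U^j\mid o_1;a_1\sim\alpha]=\sum_a\alpha(a)U^j(a)$. Let $\hat\pi$ be the policy with $\hat\pi(\cdot\mid\text{red})=100\%\,(\text{all},\text{none})$ and $\hat\pi(\cdot\mid\text{green})=100\%\,(\text{none},\text{all})$. Then $\hat\pi$ is not equal to any policy $\pi$ satisfying, for some fixed $r\in[0,1]$ and all $o_1$, \[ \pi(\cdot\mid o_1)\in\arg\max_{\alpha}\Big(r\,\mathbb E^1[U^1\mid o_1;a_1\sim\alpha]+(1-r)\,\mathbb E^2[U^2\mid o_1;a_1\sim\alpha]\Big), \] where the maximum ranges over distributions $\alpha$ on the three actions. Moreover, every such policy $\pi$ satisfies $\mathbb E^1[U^1;\pi]<\mathbb E^1[U^1;\hat\pi]$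 or $\mathbb E^2[U^2;\pi]<\mathbb E^2[U^2;\hat\pi]$.
   Context: Here $\mathbb P^j$ and $U^j$ denote player $j$'s beliefs and utility function; the machine's policy maps its observation to a (possibly randomized) action. (In this scenario $\mathbb E^1[U^1;\hat\pi]=\mathbb E^2[U^2;\hat\pi]=27$.) *)

From HB Require Import structures.
From mathcomp Require Import all_boot all_order all_algebra.
Set Implicit Arguments. Unset Strict Implicit. Unset Printing Implicit Defensive.
Import Order.TTheory GRing.Theory Num.Theory.
Local Open Scope ring_scope.

Inductive obs := red | green.
Definition obs_to_bool (o : obs) : bool := if o is red then true else false.
Definition bool_to_obs (b : bool) : obs := if b then red else green.
Lemma obs_boolK : cancel obs_to_bool bool_to_obs. Proof. by case. Qed.
HB.instance Definition _ := Finite.copy obs (can_type obs_boolK).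

Inductive action := all_none | half_half | none_all.
Definition action_to_ord (a : action) : 'I_3 :=
  match a with all_none => @Ordinal 3 0 isT | half_half => @Ordinal 3 1 isT | none_all => @Ordinal 3 2 isT end.
Definition ord_to_action (i : 'I_3) : action :=
  match val i with 0 => all_none | 1 => half_half | _ => none_all end.
Lemma action_ordK : cancel action_to_ord ord_to_action.
Proof. by case. Qed.
HB.instance Definition _ := Finite.copy action (can_type action_ordK).

Section Scenario.
Variable R : realFieldType.

Definition P1 (o : obs) : R := if o is red then 9 / 10 else 1 / 10.
Definition P2 (o : obs) : R := if o is red then 1 / 10 else 9 / 10.

Definition U1 (a : action) : R :=
  match a with all_none => 30 | half_half => 20 | none_all => 0 end.
Definition U2 (a : action) : R :=
  match a with all_none => 0 | half_half => 20 | none_all => 30 end.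

Definition is_dist (alpha : action -> R) : Prop :=
  (forall a, 0 <= alpha a) /\ \sum_(a : action) alpha a = 1.

(* A (randomized) policy: pi o a = pi(a | o). *)
Definition policy := obs -> action -> R.
Definition is_policy (pi : policy) : Prop := forall o, is_dist (pi o).

(* E^j[U^j | o_1 ; a_1 ~ alpha]  (independent of o_1 here). *)
Definition condEU (U : action -> R) (alpha : action -> R) : R :=
  \sum_(a : action) alpha a * U a.

Definition EU (P : obs -> R) (U : action -> R) (pi : policy) : R :=
  \sum_(o : obs) P o * condEU U (pi o).

Definition in_argmax (r : R) (alpha : action -> R) : Prop :=
  is_dist alpha /\
  forall beta, is_dist beta ->
    r * condEU U1 beta + (1 - r) * condEU U2 beta
      <= r * condEU U1 alpha + (1 - r) * condEU U2 alpha.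

Definition pihat : policy := fun o a =>
  match o with
  | red => if a is all_none then 1 else 0
  | green => if a is none_all then 1 else 0
  end.

End Scenario.

From mathcomp Require Import all_boot all_order all_algebra.
From mathcomp Require Import ring lra.
Import Order.TTheory GRing.Theory Num.Theory.
Local Open Scope ring_scope.

(** The sure split (half,half) gives both players 20, so any argmax of a
    weighted welfare r E^1 + (1-r) E^2 has welfare at least 20.  The feasible
    pairs (E^1, E^2) lie below the Pareto frontier through (30,0), (20,20),
    (0,30), i.e. satisfy 2 E^1 + E^2 <= 60 and E^1 + 2 E^2 <= 60; together with
    the welfare bound this forces E^2 <= 20 when r >= 1/2 and E^1 <= 20 when
    r <= 1/2, whatever the observation.  Averaging over the observation, the
    player favoured less gets at most 20 ex ante, whereas pihat gives each
    player 27 by their own beliefs. *)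

Lemma big_action (V : nmodType) (F : action -> V) :
  \sum_(a : action) F a = F all_none + F half_half + F none_all.
Proof.
rewrite (perm_big [:: all_none; half_half; none_all]) /=.
  by rewrite !big_cons big_nil addr0 addrA.
apply: uniq_perm; first exact: index_enum_uniq.
  by [].
by case; rewrite mem_index_enum.
Qed.

Lemma big_obs (V : nmodType) (F : obs -> V) :
  \sum_(o : obs) F o = F red + F green.
Proof.
rewrite (perm_big [:: red; green]) /=.
  by rewrite !big_cons big_nil addr0.
apply: uniq_perm; first exact: index_enum_uniq.
  by [].
by case; rewrite mem_index_enum.
Qed.

Section Scenario.
Context {R : realFieldType}.

Lemma welfare_frontier_y_le (r x y c : R) :
  1 / 3 < r -> x + 2 * y <= 3 * c -> c <= r * x + (1 - r) * y -> y <= c.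
Proof.
move=> r_gt frontier welfare; rewrite leNgt; apply/negP => y_gt.
have : 0 < (3 * r - 1) * (y - c) by apply: mulr_gt0; lra.
nra.
Qed.

Lemma welfare_frontier_x_le (r x y c : R) :
  r < 2 / 3 -> 2 * x + y <= 3 * c -> c <= r * x + (1 - r) * y -> x <= c.
Proof.
move=> r_lt frontier welfare.
apply: (@welfare_frontier_y_le (1 - r) y x c); [lra | lra |].
by have -> : (1 - r) * y + (1 - (1 - r)) * x = r * x + (1 - r) * y by ring.
Qed.

Definition half_dist : action -> R := fun a => if a is half_half then 1 else 0.

Lemma half_dist_is_dist : is_dist half_dist.
Proof. by split; [case | rewrite big_action /= add0r addr0]. Qed.

Lemma in_argmax_welfare_ge {r : R} {alpha} :
  in_argmax r alpha ->
  20 <= r * condEU (@U1 R) alpha + (1 - r) * condEU (@U2 R) alpha.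
Proof.
case=> _ /(_ _ half_dist_is_dist).
by rewrite /condEU !big_action /=; lra.
Qed.

Lemma condEU_frontier {alpha : action -> R} : is_dist alpha ->
  2 * condEU (@U1 R) alpha + condEU (@U2 R) alpha <= 3 * 20 /\
  condEU (@U1 R) alpha + 2 * condEU (@U2 R) alpha <= 3 * 20.
Proof.
case=> alpha_ge0; rewrite /condEU !big_action /= => alpha_sum.
have := alpha_ge0 all_none; have := alpha_ge0 half_half; have := alpha_ge0 none_all.
by split; lra.
Qed.

Lemma in_argmax_U2_le {r : R} {alpha} :
  1 / 2 <= r -> in_argmax r alpha -> condEU (@U2 R) alpha <= 20.
Proof.
move=> r_ge opt; have [_ frontier] := condEU_frontier opt.1.
apply: (@welfare_frontier_y_le r _ _ _ _ frontier (in_argmax_welfare_ge opt)); lra.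
Qed.

Lemma in_argmax_U1_le {r : R} {alpha} :
  r <= 1 / 2 -> in_argmax r alpha -> condEU (@U1 R) alpha <= 20.
Proof.
move=> r_le opt; have [frontier _] := condEU_frontier opt.1.
apply: (@welfare_frontier_x_le r _ _ _ _ frontier (in_argmax_welfare_ge opt)); lra.
Qed.

Lemma EU_le (P : obs -> R) U (pi : policy R) c :
  (forall o, 0 <= P o) -> \sum_o P o = 1 ->
  (forall o, condEU U (pi o) <= c) -> EU P U pi <= c.
Proof.
move=> P_ge0 P_sum pi_le; rewrite -[leRHS]mul1r -P_sum big_distrl /=.
by apply: ler_sum => o _; apply: ler_wpM2l.
Qed.

Lemma EU_ext {P : obs -> R} {U : action -> R} {p q : policy R} :
  (forall o a, p o a = q o a) -> EU P U p = EU P U q.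
Proof.
move=> eq_pq; apply: eq_bigr => o _; congr (_ * _).
by apply: eq_bigr => a _; rewrite eq_pq.
Qed.

Lemma EU1_pihat : EU (@P1 R) (@U1 R) (pihat R) = 27.
Proof. by rewrite /EU /condEU big_obs !big_action /=; field. Qed.

Lemma EU2_pihat : EU (@P2 R) (@U2 R) (pihat R) = 27.
Proof. by rewrite /EU /condEU big_obs !big_action /=; field. Qed.

Lemma P1_dist : (forall o, 0 <= P1 R o) /\ \sum_o P1 R o = 1.
Proof. by split; [case; rewrite /P1; lra | rewrite big_obs /=; field]. Qed.

Lemma P2_dist : (forall o, 0 <= P2 R o) /\ \sum_o P2 R o = 1.
Proof. by split; [case; rewrite /P2; lra | rewrite big_obs /=; field]. Qed.

End Scenario.

Theorem proposition2 (R : realFieldType) (r : R) (pi : policy R) :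
  0 <= r <= 1 ->
  (forall o : obs, in_argmax r (pi o)) ->
  ~ (forall (o : obs) (a : action), pi o a = pihat R o a) /\
  (EU (@P1 R) (@U1 R) pi < EU (@P1 R) (@U1 R) (pihat R) \/
   EU (@P2 R) (@U2 R) pi < EU (@P2 R) (@U2 R) (pihat R)).
Proof.
move=> _ opt.
have worse : EU (@P1 R) (@U1 R) pi < EU (@P1 R) (@U1 R) (pihat R) \/
             EU (@P2 R) (@U2 R) pi < EU (@P2 R) (@U2 R) (pihat R).
  case: (lerP (1 / 2) r) => r_half; [right | left].
  - have [P_ge0 P_sum] := @P2_dist R; rewrite EU2_pihat.
    apply: (@le_lt_trans _ _ 20); last lra.
    by apply: EU_le => // o; exact: in_argmax_U2_le r_half (opt o).
  - have [P_ge0 P_sum] := @P1_dist R; rewrite EU1_pihat.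
    apply: (@le_lt_trans _ _ 20); last lra.
    by apply: EU_le => // o; exact: in_argmax_U1_le (ltW r_half) (opt o).
split=> // eq_pihat.
by move: worse; rewrite !(EU_ext eq_pihat) !ltxx; case.
Qed.
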